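(* Let $\varepsilon>0$, let $\widetilde M_f,\widetilde M_g$ be as in the context, and let $\varphi:\widetilde M_f\to\widetilde M_g$ be the continuous map $\varphi=\phi_1\cup\cdots\cup\phi_{\eta_f}$ obtained from a leaf assignment whose path extensions agree pairwise at least common ancestors of leaves. Suppose that for every leaf node $w$ of $\widetilde M_g$ with $w\notin\mathrm{Im}(\varphi)$, the nearest ancestor $w^a$ of $w$ lying in $\mathrm{Im}(\varphi)$ satisfies $|\tilde g(w^a)-\tilde g(w)|\le2\varepsilon$. Then for every point $x\in\widetilde M_g\setminus\mathrm{Im}(\varphi)$, the nearest ancestor $x^a$ of $x$ lying in $\mathrm{Im}(\varphi)$ satisfies $|\tilde g(x^a)-\tilde g(x)|\le 2\varepsilon$.
   Context: A finite merge tree is a finite rooted tree regarded as a topological space, with a continuous height function strictly increasing along each edge toward the root. Let $M_f$ (height $\tilde f$, root $r_f$) and $M_g$ (height $\tilde g$, root $r_g$) be finite merge trees with $\tilde g(r_g)=\tilde f(r_f)+\varepsilon$. Let $H=\{\tilde f(u): u \text{ a node of } M_f\}\cup\{\tilde g(w)-\varepsilon: w\text{ a node of } M_g\}$. $\widetilde M_f$ is obtained from $M_f$ by inserting a degree-two node at every point $x$ with $\tilde f(x)\in H$ not already a node; $\widetilde M_g$ from $M_g$ by inserting degree-two nodes at all points with $\tilde g$-value in $H+\varepsilon$ not already nodes. Let $u_1,\dots,u_{\eta_f}$ be the leaves of $\widetilde M_f$, and $\phi$ assign to each $u_i$ a node $\phi(u_i)$ of $\widetilde M_g$ with $\tilde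 g(\phi(u_i))=\tilde f(u_i)+\varepsilon$. With $P_i$ the path from $u_i$ to the root of $\widetilde M_f$ and $P_i'$ that from $\phi(u_i)$ to the root of $\widetilde M_g$, $\phi_i:P_i\to P_i'$ sends $x$ to the unique point of $P_i'$ with $\tilde g$-value $\tilde f(x)+\varepsilon$; it is assumed $\phi_i(v)=\phi_j(v)$ for $v=\mathrm{LCA}(u_i,u_j)$ (lowest common ancestor) for all $i\ne j$, so $\varphi(x)=\phi_i(x)$ for $x\in P_i$ is well-defined. An ancestor of a point $x$ is a point on the upward path from $x$ to the root; the root of $\widetilde M_g$ lies in $\mathrm{Im}(\varphi)$, so nearest ancestors in the image exist. *)

From mathcomp Require Import all_boot all_order all_algebra.
Set Implicit Arguments. Unset Strict Implicit. Unset Printing Implicit Defensive.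
Import Order.TTheory GRing.Theory Num.Theory.
Local Open Scope ring_scope.

Section MergeTree.
Variable R : realFieldType.
Variable V : finType.

Definition is_merge_tree (par : V -> V) (r : V) (h : V -> R) : Prop :=
  [/\ par r = r,
      (forall v, v != r -> h v < h (par v)) &
      (forall v, exists k, iter k par v = r)].

(* Points of the geometric realization: a point is (v, t) lying on the edge
   from v (included) to par v (excluded) at height t; the root is (r, h r). *)
Definition mpoint (par : V -> V) (r : V) (h : V -> R) (p : V * R) : bool :=
  if p.1 == r then p.2 == h r else (h p.1 <= p.2) && (p.2 < h (par p.1)).

Definition nanc (par : V -> V) (u v : V) : Prop := exists k, iter k par v = u.

Definition panc (par : V -> V) (y x : V * R) : Prop :=
  nanc par y.1 x.1 /\ x.2 <= y.2.

Definition is_leaf (par : V -> V) (w : V) : Prop :=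
  forall v, par v = w -> v = w.

Definition is_lca (par : V -> V) (l u1 u2 : V) : Prop :=
  [/\ nanc par l u1, nanc par l u2 &
      forall m, nanc par m u1 -> nanc par m u2 -> nanc par m l].

Definition path_at (par : V -> V) (r : V) (h : V -> R) (p : V * R) (s : R)
  (y : V * R) : Prop :=
  [/\ mpoint par r h y, panc par y p & y.2 = s].

Definition nearest_anc_in (par : V -> V) (r : V) (h : V -> R)
  (S : V * R -> Prop) (x y : V * R) : Prop :=
  [/\ mpoint par r h y, panc par y x, S y &
      forall z, mpoint par r h z -> panc par z x -> S z -> panc par z y].
End MergeTree.

Section Phi.
Variable R : realFieldType.
Variables (Vf Vg : finType).
Variables (parf : Vf -> Vf) (rf : Vf) (hf : Vf -> R).
Variables (parg : Vg -> Vg) (rg : Vg) (hg : Vg -> R).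
Variable eps : R.

(* Nodes of \tilde M_g: points of M_g whose height lies in H + eps, where
   H = {hf u} U {hg w - eps}  (this includes all original nodes of M_g). *)
Definition tnode_g (p : Vg * R) : Prop :=
  mpoint parg rg hg p /\
  ((exists u : Vf, p.2 = hf u + eps) \/ (exists w : Vg, p.2 = hg w)).

(* phi_u : P_u -> P'_u, x |-> the point of the path from phi u with height
   hf-height(x) + eps; here as a relation. *)
Definition phi_i (phi : Vf -> Vg * R) (u : Vf) (x : Vf * R) (y : Vg * R)
  : Prop :=
  [/\ mpoint parf rf hf x, panc parf x (u, hf u) &
      path_at parg rg hg (phi u) (x.2 + eps) y].

Definition leaf_assignment (phi : Vf -> Vg * R) : Prop :=
  forall u, is_leaf parf u -> tnode_g (phi u) /\ (phi u).2 = hf u + eps.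

Definition agree_at_lca (phi : Vf -> Vg * R) : Prop :=
  forall u1 u2 l, is_leaf parf u1 -> is_leaf parf u2 -> u1 != u2 ->
    is_lca parf l u1 u2 ->
    forall y1 y2, phi_i phi u1 (l, hf l) y1 -> phi_i phi u2 (l, hf l) y2 ->
    y1 = y2.

Definition in_image (phi : Vf -> Vg * R) (y : Vg * R) : Prop :=
  exists u, is_leaf parf u /\ exists x, phi_i phi u x y.
End Phi.

(* The image of varphi is closed upwards: a point z above phi_u(x) is
   phi_u of the point of P_u at height z - eps, which exists because the
   roots differ in height by exactly eps.  So if x is not in the image, no
   point below x is either, and a leaf w below x has the same nearest
   ancestor x^a in the image as x; then x^a - x <= x^a - w <= 2 eps. *)
From mathcomp Require Import all_boot all_order all_algebra.
Set Implicit Arguments. Unset Strict Implicit. Unset Printing Implicit Defensive.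
Import Order.TTheory GRing.Theory Num.Theory.
Local Open Scope ring_scope.

Section MergeTreeFacts.
Variable R : realFieldType.
Variable V : finType.
Variables (par : V -> V) (r : V) (h : V -> R).
Hypothesis MT : is_merge_tree par r h.

Lemma nanc_refl v : nanc par v v.
Proof. by exists 0%N. Qed.

Lemma nanc_trans a b c : nanc par a b -> nanc par b c -> nanc par a c.
Proof. by move=> [k1 <-] [k2 <-]; exists (k1 + k2)%N; rewrite iterD. Qed.

Lemma nanc_par v : nanc par (par v) v.
Proof. by exists 1%N. Qed.

Lemma panc_trans (x y z : V * R) : panc par x y -> panc par y z -> panc par x z.
Proof.
by move=> [Nxy Hxy] [Nyz Hyz]; split; [exact: nanc_trans Nxy Nyz | exact: le_trans Hyz Hxy].
Qed.

Lemma h_iter_par k v : h v <= h (iter k par v).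
Proof.
case: MT => Hr Hlt _; elim: k => [|k IH] //=.
have [E|NE] := eqVneq (iter k par v) r; first by rewrite E Hr -E.
exact: le_trans IH (ltW (Hlt _ NE)).
Qed.

Lemma h_nanc u v : nanc par u v -> h v <= h u.
Proof. by move=> [k <-]; exact: h_iter_par. Qed.

Lemma h_le_root v : h v <= h r.
Proof. by case: MT => _ _ Hk; apply: h_nanc; exact: Hk. Qed.

Lemma mpoint_bounds p : mpoint par r h p -> h p.1 <= p.2 <= h r.
Proof.
rewrite /mpoint; case: eqP => [-> /eqP -> |_ /andP[-> Hp]]; first by rewrite lexx.
exact: ltW (lt_le_trans Hp (h_le_root _)).
Qed.

Lemma mpoint_lt_par p : p.1 != r -> mpoint par r h p -> p.2 < h (par p.1).
Proof. by rewrite /mpoint => /negbTE ->; case/andP. Qed.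

Lemma panc_of_le (x y z : V * R) : mpoint par r h y -> mpoint par r h z ->
  panc par y x -> panc par z x -> y.2 <= z.2 -> panc par z y.
Proof.
move=> My Mz [[a Ea] _] [[b Eb] _] Hyz; split=> //.
case: MT => Hr _ _.
have [Hab|Hba] := leqP a b.
  by exists (b - a)%N; rewrite -Ea -Eb -iterD subnK.
have Ey : y.1 = iter (a - b) par z.1 by rewrite -Ea -Eb -iterD subnK // ltnW.
have [Ez|Nz] := eqVneq z.1 r.
  by exists 0%N; rewrite Ey Ez; elim: (a - b)%N => //= n ->.
have [n En] : exists n, (a - b = n.+1)%N by exists (a - b).-1; rewrite prednK ?subn_gt0.
have Hpar : h (par z.1) <= y.2.
  have /andP[Hy _] := mpoint_bounds My.
  by apply: le_trans Hy; rewrite Ey En iterSr; exact: h_iter_par.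
by have := lt_le_trans (mpoint_lt_par Nz Mz) (le_trans Hpar Hyz); rewrite ltxx.
Qed.

Lemma mpoint_above u t : h u <= t -> t <= h r ->
  exists v, nanc par v u /\ mpoint par r h (v, t).
Proof.
case: MT => Hr _ Hk; have [k Ek] := Hk u.
elim: k u Ek => [|k IH] u Ek Hu Ht.
  exists r; split; first by rewrite -Ek; exact: nanc_refl.
  by rewrite /mpoint /= eqxx eq_le Ht -Ek Hu.
have [Eu|Nu] := eqVneq u r.
  exists r; split; first by rewrite Eu; exact: nanc_refl.
  by rewrite /mpoint /= eqxx eq_le Ht -Eu Hu.
have [Htp|Htp] := ltP t (h (par u)).
  by exists u; split; [exact: nanc_refl | rewrite /mpoint /= (negbTE Nu) Hu Htp].
rewrite iterSr in Ek; have [v [Nv Mv]] := IH _ Ek Htp Ht.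
by exists v; split=> //; exact: nanc_trans Nv (nanc_par u).
Qed.

Lemma leaf_or_child v : is_leaf par v \/ exists2 c, par c = v & c != v.
Proof.
have [/existsP[c /andP[/eqP Ec Nc]]|/existsPn Hno] :=
  boolP [exists c, (par c == v) && (c != v)]; first by right; exists c.
by left=> c Ec; apply/eqP; move: (Hno c); rewrite Ec eqxx => /negbNE.
Qed.

Lemma h_child_lt c v : par c = v -> c != v -> h c < h v.
Proof.
case: MT => Hr Hlt _ Ec Nc; rewrite -Ec; apply: Hlt.
by apply: contraNneq Nc => Ecr; rewrite -Ec Ecr Hr.
Qed.

Lemma leaf_below v : exists2 w, is_leaf par w & nanc par v w.
Proof.
move: {2}#|[set u | h u < h v]| (leqnn #|[set u | h u < h v]|) => n.
elim: n v => [|n IH] v Hn; have [Lv|[c Ec Nc]] := leaf_or_child v;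
  try by exists v => //; exact: nanc_refl.
  have Hcv := h_child_lt Ec Nc.
  by move: Hn; rewrite leqn0 => /eqP/cards0_eq/setP/(_ c); rewrite !inE Hcv.
have Hcv := h_child_lt Ec Nc.
have Hsub : [set u | h u < h c] \proper [set u | h u < h v].
  apply/properP; split; last by exists c; rewrite !inE ?ltxx.
  by apply/subsetP => x; rewrite !inE => Hx; exact: lt_trans Hx Hcv.
have [w Lw Ncw] := IH c (ltnSE (leq_trans (proper_card Hsub) Hn)).
by exists w => //; rewrite -Ec; exact: nanc_trans (nanc_par c) Ncw.
Qed.

Section UpClosed.
Variable S : V * R -> Prop.
Hypothesis S_up : forall y z, S y -> mpoint par r h z -> panc par z y -> S z.

Lemma nearest_anc_in_below (x y xa : V * R) : mpoint par r h x -> ~ S x ->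
  panc par x y -> nearest_anc_in par r h S x xa -> nearest_anc_in par r h S y xa.
Proof.
move=> Mx Nx Axy [Mxa Axax Sxa Hnear]; split=> //; first exact: panc_trans Axax Axy.
move=> z Mz Azy Sz; have [Hzx|Hxz] := leP z.2 x.2.
  by case: Nx; apply: S_up Sz Mx (panc_of_le Mz Mx Azy Axy Hzx).
exact: Hnear Mz (panc_of_le Mx Mz Axy Azy (ltW Hxz)) Sz.
Qed.

End UpClosed.
End MergeTreeFacts.

Lemma in_image_up_closed (R : realFieldType) (Vf Vg : finType)
  (parf : Vf -> Vf) (rf : Vf) (hf : Vf -> R)
  (parg : Vg -> Vg) (rg : Vg) (hg : Vg -> R) (eps : R) (phi : Vf -> Vg * R) :
  is_merge_tree parf rf hf -> is_merge_tree parg rg hg -> hg rg = hf rf + eps ->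
  forall y z, in_image parf rf hf parg rg hg eps phi y ->
  mpoint parg rg hg z -> panc parg z y -> in_image parf rf hf parg rg hg eps phi z.
Proof.
move=> MTf MTg Hroot y z [u [Lu [x [_ [_ Hxu] [_ Ayu Ey]]]]] Mz Azy.
exists u; split=> //.
have Hlo : hf u <= z.2 - eps.
  by rewrite lerBrDr; apply: le_trans Azy.2; rewrite Ey lerD2r.
have Hhi : z.2 - eps <= hf rf.
  by rewrite lerBlDr -Hroot; case/andP: (mpoint_bounds MTg Mz).
have [v [Nvu Mv]] := mpoint_above MTf Hlo Hhi.
exists (v, z.2 - eps); split=> //; split=> //=; last by rewrite subrK.
exact: panc_trans Azy Ayu.
Qed.

Theorem lemma4p9 (R : realFieldType) (Vf Vg : finType)
  (parf : Vf -> Vf) (rf : Vf) (hf : Vf -> R)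
  (parg : Vg -> Vg) (rg : Vg) (hg : Vg -> R)
  (eps : R) (phi : Vf -> Vg * R) :
  0 < eps ->
  is_merge_tree parf rf hf ->
  is_merge_tree parg rg hg ->
  hg rg = hf rf + eps ->
  leaf_assignment parf hf parg rg hg eps phi ->
  agree_at_lca parf rf hf parg rg hg eps phi ->
  (forall w, is_leaf parg w ->
     ~ in_image parf rf hf parg rg hg eps phi (w, hg w) ->
     forall wa, nearest_anc_in parg rg hg
                  (in_image parf rf hf parg rg hg eps phi) (w, hg w) wa ->
     `|wa.2 - hg w| <= 2 * eps) ->
  forall x, mpoint parg rg hg x ->
    ~ in_image parf rf hf parg rg hg eps phi x ->
    forall xa, nearest_anc_in parg rg hg
                 (in_image parf rf hf parg rg hg eps phi) x xa ->
    `|xa.2 - x.2| <= 2 * eps.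
Proof.
move=> _ MTf MTg Hroot _ _ Hleaf x Mx Nx xa Hxa.
have S_up := in_image_up_closed (phi := phi) MTf MTg Hroot.
have [w Lw Nxw] := leaf_below MTg x.1.
have Axw : panc parg x (w, hg w).
  by split=> //=; apply: le_trans (h_nanc MTg Nxw) _; case/andP: (mpoint_bounds MTg Mx).
have Nw : ~ in_image parf rf hf parg rg hg eps phi (w, hg w).
  by move=> Iw; apply: Nx; exact: S_up Iw Mx Axw.
have Hwa := Hleaf w Lw Nw xa (nearest_anc_in_below MTg S_up Mx Nx Axw Hxa).
have [_ [_ Hxxa] _ _] := Hxa.
rewrite ger0_norm ?subr_ge0 //; apply: le_trans Hwa.
by rewrite ler_normr lerB // Axw.2.
Qed.
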